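(* Assume the standing setting described in the context (in particular Conditions (I), (II), (III)). Let $y\in\mathbb{R}$ satisfy $g(y)>0$, and let $(\widehat{Y}_1(y),\widehat{Y}_2(y))\in\mathbb{K}_1^*\times\mathbb{K}_2^*$ be an optimal solution of the minimization problem defining $g(y)$. Then $$y-\rho\, g(y)\;\le\; y+\rho\,\tilde t\big(y,\widehat{Y}_2(y)\big)\;\le\; y^*.$$
   Context: Setting: $\mathbb{V}$ is a finite Cartesian product of spaces of real symmetric matrices, with the trace inner product $\langle X,Y\rangle$ and norm $\|X\|=\sqrt{\langle X,X\rangle}$; $I$ denotes the identity element of $\mathbb{V}$ and, for $A\in\mathbb{V}$, $\lambda_{\min}(A)$ ($\lambda_{\max}(A)$) is the smallest (largest) eigenvalue over all blocks. $\mathbb{K}_1$ is the cone of positive semidefinite elements of $\mathbb{V}$ (so $\mathbb{K}_1^*=\mathbb{K}_1$), $\mathbb{K}_2\subseteq\mathbb{V}$ is a closed convex cone, and for a cone $\mathbb{J}$, $\mathbb{J}^*=\{Y:\langle X,Y\rangle\ge0\ \forall X\in\mathbb{J}\}$. Condition (II): $(\mathbb{K}_1\cap\mathbb{K}_2)^*=\mathbb{K}_1^*+\mathbb{K}_2^*$. Given $Q,H\in\mathbb{V}$, consider the primal problem $\varphi^*=\inf\{\langle Q,X\rangle: X\in\mathbb{K}_1\cap\mathbb{K}_2,\ \langle H,X\rangle=1\}$ and its dual $y^*=\sup\{y: Q-Hy=Y_1+Y_2,\ Y_1\in\mathbb{K}_1^*,\ Y_2\in\mathbb{K}_2^*\}$.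 Condition (I): the primal problem is feasible and $H\in\mathbb{K}_1^*+\mathbb{K}_2^*$. Condition (III): a number $\rho>0$ is known such that $\langle I,X\rangle\le\rho$ for every feasible $X$ of the primal problem. Define $G(y)=Q-Hy$, and $$g(y)=\min\{\|G(y)-(Y_1+Y_2)\|: Y_1\in\mathbb{K}_1^*,\ Y_2\in\mathbb{K}_2^*\}.$$ For $y\in\mathbb{R}$ and $Y_2\in\mathbb{K}_2^*$, define $\tilde t(y,Y_2)=\min\{0,\lambda_{\min}(G(y)-Y_2)\}$. *)

From Stdlib Require Import Reals ClassicalEpsilon.
From mathcomp Require Import all_boot all_algebra.
Set Implicit Arguments. Unset Strict Implicit. Unset Printing Implicit Defensive.
Open Scope R_scope.

Section Space.
(* V = S^{n 0} x ... x S^{n (k-1)} ; an element is a k-tuple of square real matrices,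
   the symmetric ones forming V (predicate symV). *)
Variables (k : nat) (n : 'I_k -> nat).

Definition mkM (m : nat) (f : 'I_m -> 'I_m -> R) : 'M[R]_m :=
  matrix_of_fun matrix_key f.

Definition Vt := forall i : 'I_k, 'M[R]_(n i).

Definition symV (X : Vt) : Prop := forall i a b, X i a b = X i b a.

Definition vzero : Vt := fun i => mkM (fun a b => 0).
Definition vI : Vt := fun i => mkM (fun a b => if a == b then 1 else 0).
Definition vadd (X Y : Vt) : Vt := fun i => mkM (fun a b => X i a b + Y i a b).
Definition vsub (X Y : Vt) : Vt := fun i => mkM (fun a b => X i a b - Y i a b).
Definition vscale (c : R) (X : Vt) : Vt := fun i => mkM (fun a b => c * X i a b).

(* trace inner product <X,Y> = sum_i tr(X_i Y_i) (= sum of entrywise products for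
   symmetric blocks); written entrywise as sum_i sum_{a,b} X_i(a,b) Y_i(a,b) *)
Definition inner (X Y : Vt) : R :=
  \big[Rplus/0]_(i < k) \big[Rplus/0]_(a < n i) \big[Rplus/0]_(b < n i) (X i a b * Y i a b).

Definition vnorm (X : Vt) : R := sqrt (inner X X).

Definition is_eigenvalue (X : Vt) (l : R) : Prop :=
  exists (i : 'I_k) (v : 'I_(n i) -> R), (exists a, v a <> 0) /\
    forall a, \big[Rplus/0]_(b < n i) (X i a b * v b) = l * v a.

Definition is_lambda_min (X : Vt) (l : R) : Prop :=
  is_eigenvalue X l /\ forall l', is_eigenvalue X l' -> l <= l'.

Definition lambda_min (X : Vt) : R := epsilon (inhabits 0) (is_lambda_min X).

Definition psd (X : Vt) : Prop :=
  symV X /\ forall (i : 'I_k) (v : 'I_(n i) -> R),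
    0 <= \big[Rplus/0]_(a < n i) \big[Rplus/0]_(b < n i) (v a * X i a b * v b).

Definition dual (J : Vt -> Prop) (Y : Vt) : Prop :=
  symV Y /\ forall X, J X -> 0 <= inner X Y.

Definition cap (J1 J2 : Vt -> Prop) (X : Vt) : Prop := J1 X /\ J2 X.

Definition msum (J1 J2 : Vt -> Prop) (Y : Vt) : Prop :=
  exists Y1 Y2, J1 Y1 /\ J2 Y2 /\ Y = vadd Y1 Y2.

Definition closed_convex_cone (K : Vt -> Prop) : Prop :=
  (forall X, K X -> symV X) /\
  K vzero /\
  (forall X Y, K X -> K Y -> K (vadd X Y)) /\
  (forall c X, 0 <= c -> K X -> K (vscale c X)) /\
  (forall X, symV X -> ~ K X ->
     exists eps, 0 < eps /\ forall Z, symV Z -> vnorm (vsub Z X) < eps -> ~ K Z).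

End Space.

From Stdlib Require Import Reals ClassicalEpsilon Lra.
From mathcomp Require Import all_boot all_order all_algebra.
From mathcomp Require Import Rstruct.
Set Implicit Arguments. Unset Strict Implicit. Unset Printing Implicit Defensive.
Open Scope R_scope.

(* Lemma 3.3:  y - rho g(y) <= y + rho t <= y*,  where M := G(y) - Y2 and t := min(0, lmin(M)).
   - Left inequality.  If v is an eigenvector of M for l := lmin(M) and vv^T the rank-one psd
     element it spans, then l|v|^2 = <vv^T, M> = <vv^T, Y1> + <vv^T, G(y) - Y1 - Y2>, where the
     first term is >= 0 because Y1 is in K1^* and the second is >= -|v|^2 g(y) by Cauchy-Schwarz
     (||vv^T|| = |v|^2).  So -g(y) <= t.  Only feasibility of (Y1, Y2) is used, not optimality.
   - Right inequality.  As t <= lmin(M), M - tI is psd, so <X, M - tI> >= 0 for psd X (Fejer's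
     theorem); Conditions (I)-(III) give <I, X> <= rho <X, H> on K1 /\ K2, and t <= 0, hence
     <X, G(y + rho t)> >= 0 there: by Condition (II), y + rho t is dual feasible, so it is below y*. *)

Notation "\S_ ( i < m ) F" := (\big[Rplus/0]_(i < m) F)
  (at level 36, F at level 36, i, m at level 50).

Lemma discriminant_le a b c :
  0 <= a -> (forall s, 0 <= a * s * s + 2 * b * s + c) -> b * b <= a * c.
Proof.
move=> Ha; case: (Rle_lt_or_eq_dec 0 a Ha) => [a_pos|<-] Hq.
  have := Hq (- b / a).
  have -> : a * (- b / a) * (- b / a) + 2 * b * (- b / a) + c = c - b * b / a by field; lra.
  move=> Hc; have -> : b * b = a * (b * b / a) by field; lra.
  apply: Rmult_le_compat_l => //; lra.
case: (Req_dec b 0) => [->|b_neq0]; first lra.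
have := Hq (- (Rabs c + 1) / (2 * b)).
have -> : 0 * (- (Rabs c + 1) / (2 * b)) * (- (Rabs c + 1) / (2 * b))
          + 2 * b * (- (Rabs c + 1) / (2 * b)) + c = c - (Rabs c + 1) by field.
have := Rle_abs c; lra.
Qed.

Lemma abs_le_sqrt_mul a b c : 0 <= a -> 0 <= c -> b * b <= a * c -> Rabs b <= sqrt a * sqrt c.
Proof.
by move=> Ha Hc H; rewrite -sqrt_mult // -sqrt_Rsqr_abs; apply: sqrt_le_1_alt.
Qed.

Lemma finite_argmin (I : finType) (P : pred I) (L : I -> R) :
  (exists i, P i) -> exists i0, P i0 /\ forall i, P i -> L i0 <= L i.
Proof.
case=> i Pi; case: (@Order.TotalTheory.arg_minP _ R I i P L Pi) => j Pj Hj.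
by exists j; split => // i' Pi'; apply/RleP; exact: Hj.
Qed.

Section FiniteSums.
Variable m : nat.
Implicit Types F G : 'I_m -> R.

Lemma sum_le F G : (forall i, F i <= G i) -> \S_(i < m) F i <= \S_(i < m) G i.
Proof. by move=> H; apply: (big_ind2 (fun x y => x <= y)) => //; [lra | move=> *; lra]. Qed.

Lemma sum_ge0 F : (forall i, 0 <= F i) -> 0 <= \S_(i < m) F i.
Proof. by move=> H; apply: (big_ind (fun x => 0 <= x)) => //; [lra | move=> *; lra]. Qed.

Lemma sum_mull c F : \S_(i < m) (c * F i) = c * \S_(i < m) F i.
Proof. by rewrite big_distrr. Qed.

Lemma sum_mulr c F : \S_(i < m) (F i * c) = \S_(i < m) F i * c.
Proof. by rewrite big_distrl. Qed.

Lemma sum_sub F G : \S_(i < m) (F i - G i) = \S_(i < m) F i - \S_(i < m) G i.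
Proof.
by apply: (big_ind3 (fun x y z => x = y - z)) => //; [ring | move=> ? ? ? ? ? ? -> ->; ring].
Qed.

Lemma sum_term_le F p : (forall i, 0 <= F i) -> F p <= \S_(i < m) F i.
Proof.
move=> H; rewrite (bigD1 p) //= -{1}[F p]Rplus_0_r; apply: Rplus_le_compat_l.
by apply: (big_ind (fun x => 0 <= x)) => //; move=> *; lra.
Qed.

Lemma sum_abs F : Rabs (\S_(i < m) F i) <= \S_(i < m) Rabs (F i).
Proof.
apply: (big_ind2 (fun x y => Rabs x <= y)).
- by rewrite Rabs_R0; lra.
- by move=> x1 x2 y1 y2 H1 H2; have := Rabs_triang x1 y1; lra.
- by move=> i _; lra.
Qed.

Lemma sum_empty F : m = 0%N -> \S_(i < m) F i = 0.
Proof. by move=> m0; apply: big1 => i _; have := ltn_ord i; rewrite {2}m0. Qed.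

Definition delta (p : 'I_m) : 'I_m -> R := fun a => if a == p then 1 else 0.

Lemma sum_delta_l p F : \S_(b < m) (delta p b * F b) = F p.
Proof. by rewrite (bigD1 p) //= /delta eqxx big1 => [|b /negbTE ->]; ring. Qed.

Lemma sum_delta_r p F : \S_(b < m) (F b * delta p b) = F p.
Proof. by rewrite -(sum_delta_l p F); apply: eq_bigr => b _; ring. Qed.

End FiniteSums.

Section DoubleSums.
Variables m m' : nat.
Implicit Types F G : 'I_m -> 'I_m' -> R.

Lemma sum2_add F G : \S_(a < m) \S_(b < m') (F a b + G a b) =
  \S_(a < m) \S_(b < m') F a b + \S_(a < m) \S_(b < m') G a b.
Proof. by rewrite -big_split; apply: eq_bigr => a _; rewrite big_split. Qed.

Lemma sum2_mull c F :
  \S_(a < m) \S_(b < m') (c * F a b) = c * \S_(a < m) \S_(b < m') F a b.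
Proof. by rewrite -sum_mull; apply: eq_bigr => a _; rewrite sum_mull. Qed.

Lemma sum_prod (f : 'I_m -> R) (g : 'I_m' -> R) :
  \S_(a < m) \S_(b < m') (f a * g b) = \S_(a < m) f a * \S_(b < m') g b.
Proof. by rewrite big_distrlr. Qed.

End DoubleSums.

Section QuadraticForms.
Variable m : nat.
Implicit Types (A : 'I_m -> 'I_m -> R) (u w : 'I_m -> R).

Definition bil A u w := \S_(a < m) \S_(b < m) (u a * A a b * w b).
Definition qf A w := bil A w w.
Definition nsq w := \S_(a < m) (w a * w a).
Definition mv A w : 'I_m -> R := fun a => \S_(b < m) (A a b * w b).
Definition symf A := forall a b, A a b = A b a.
Definition psdf A := forall w, 0 <= qf A w.
(* the l1-norm of the entries, a crude operator bound *)
Definition sabs A := \S_(a < m) \S_(b < m) Rabs (A a b).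

Lemma nsq_ge0 w : 0 <= nsq w.
Proof. by apply: sum_ge0 => a; apply: Rle_0_sqr. Qed.

Lemma sq_le_nsq w a : w a * w a <= nsq w.
Proof. by apply: (@sum_term_le _ (fun a => w a * w a) a) => i; exact: Rle_0_sqr. Qed.

Lemma nsq_pos w a : w a <> 0 -> 0 < nsq w.
Proof. by move=> Ha; have := sq_le_nsq w a; have := Rsqr_pos_lt _ Ha; rewrite /Rsqr; lra. Qed.

Lemma bil_mv A u w : bil A u w = \S_(a < m) (u a * mv A w a).
Proof. by apply: eq_bigr => a _; rewrite /mv -sum_mull; apply: eq_bigr => b _; ring. Qed.

Lemma bil_sym A u w : symf A -> bil A w u = bil A u w.
Proof.
move=> HA; rewrite /bil exchange_big; apply: eq_bigr => a _; apply: eq_bigr => b _.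
by rewrite HA; ring.
Qed.

Lemma qf_line A u w s :
  qf A (fun a => u a + s * w a) = qf A u + s * (bil A u w + bil A w u) + s * s * qf A w.
Proof.
rewrite /qf /bil; transitivity (\S_(a < m) \S_(b < m) (u a * A a b * u b
    + (s * (u a * A a b * w b) + s * (w a * A a b * u b)) + (s * s) * (w a * A a b * w b))).
  by apply: eq_bigr => a _; apply: eq_bigr => b _; ring.
by rewrite !sum2_add !sum2_mull; ring.
Qed.

Lemma bil_delta_l A p w : bil A (delta p) w = mv A w p.
Proof.
rewrite /bil exchange_big /mv; apply: eq_bigr => b _.
by rewrite -(sum_delta_l p (fun a => A a b * w b)); apply: eq_bigr => a _; ring.
Qed.

Lemma bil_delta_r A u p : bil A u (delta p) = \S_(a < m) (u a * A a p).
Proof. by apply: eq_bigr => a _; rewrite sum_delta_r. Qed.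

Lemma bil_delta A p q : bil A (delta p) (delta q) = A p q.
Proof. by rewrite bil_delta_l /mv sum_delta_r. Qed.

Lemma qf_delta A p : qf A (delta p) = A p p.
Proof. exact: bil_delta. Qed.

Lemma psd_diag_ge0 A p : psdf A -> 0 <= A p p.
Proof. by move=> HP; rewrite -qf_delta. Qed.

Lemma qf_sub_scaled_id A A' l w : (forall a b, A' a b = A a b - l * delta a b) ->
  qf A' w = qf A w - l * nsq w.
Proof.
move=> HA'; rewrite /qf /bil /nsq -sum_mull -sum_sub; apply: eq_bigr => a _.
transitivity (\S_(b < m) (w a * A a b * w b - (l * w a) * (delta a b * w b))).
  by apply: eq_bigr => b _; rewrite HA'; ring.
by rewrite sum_sub sum_mull sum_delta_l; ring.
Qed.

Lemma cauchy_schwarz_form A u w : symf A -> psdf A ->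
  bil A u w * bil A u w <= qf A w * qf A u.
Proof.
move=> HS HP; apply: discriminant_le => // s.
by have := HP (fun a => u a + s * w a); rewrite qf_line (bil_sym u w HS); lra.
Qed.

Definition idf : 'I_m -> 'I_m -> R := fun a b => delta a b.

Lemma bil_idf u w : bil idf u w = \S_(a < m) (u a * w a).
Proof.
apply: eq_bigr => a _; rewrite -(sum_delta_l a (fun b => u a * w b)).
by apply: eq_bigr => b _; rewrite /idf; ring.
Qed.

Lemma cauchy_schwarz_sum u w :
  \S_(a < m) (u a * w a) * \S_(a < m) (u a * w a) <= nsq u * nsq w.
Proof.
have idf_sym : symf idf by move=> a b; rewrite /idf /delta eq_sym.
have idf_psd : psdf idf by move=> v; rewrite /qf bil_idf; exact: nsq_ge0.
have := cauchy_schwarz_form u w idf_sym idf_psd.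
by rewrite /qf !bil_idf Rmult_comm.
Qed.

Lemma sabs_ge0 A : 0 <= sabs A.
Proof. by apply: sum_ge0 => a; apply: sum_ge0 => b; exact: Rabs_pos. Qed.

Lemma qf_abs_le A w : Rabs (qf A w) <= sabs A * nsq w.
Proof.
rewrite /qf /bil /sabs -sum_mulr; apply: Rle_trans (sum_abs _) _.
apply: sum_le => a; rewrite -sum_mulr; apply: Rle_trans (sum_abs _) _.
apply: sum_le => b.
have Hab : Rabs (w a * w b) <= nsq w.
  have := sq_le_nsq w a; have := sq_le_nsq w b.
  by case: (Rcase_abs (w a * w b)) => h; [rewrite Rabs_left | rewrite Rabs_right]; nra.
have -> : w a * A a b * w b = A a b * (w a * w b) by ring.
by rewrite Rabs_mult; have := Rabs_pos (A a b); nra.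
Qed.

(* For symmetric psd A:  |Aw|^2 = bil A (Aw) w <= sqrt(qf A (Aw)) sqrt(qf A w), and
   qf A (Aw) <= sabs A |Aw|^2, whence |Aw|^2 <= sabs A * qf A w. *)
Lemma nsq_mv_le_qf A w : symf A -> psdf A -> nsq (mv A w) <= sabs A * qf A w.
Proof.
move=> HS HP; set z := mv A w.
have Hcs := cauchy_schwarz_form z w HS HP; rewrite bil_mv -/z -/(nsq z) in Hcs.
have Hqz : qf A z <= sabs A * nsq z by have := qf_abs_le A z; have := Rle_abs (qf A z); lra.
have Hq := HP w; have Hz := nsq_ge0 z.
case: (Rle_lt_or_eq_dec 0 (nsq z) Hz) => [z_pos|<-]; last exact: Rmult_le_pos (sabs_ge0 A) Hq.
apply: (Rmult_le_reg_l (nsq z)) => //.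
by have := Rmult_le_compat_l (qf A w) _ _ Hq Hqz; nra.
Qed.

End QuadraticForms.

Section Coercivity.
Variable m : nat.
Implicit Types (B : 'M[R]_m) (w : 'I_m -> R).

Lemma unitmx_bounded_below B : B \in unitmx ->
  exists T, 0 <= T /\ forall w, nsq w <= T * nsq (mv B w).
Proof.
move=> HU; pose Bi := invmx B.
have inv_entries c b : \S_(a < m) (Bi c a * B a b) = delta c b.
  have := congr1 (fun M : 'M[R]_m => M c b) (mulVmx HU).
  by rewrite !mxE /delta eq_sym; case: eqP.
exists (\S_(c < m) nsq (Bi c)); split; first by apply: sum_ge0 => c; exact: nsq_ge0.
move=> w; rewrite {1}/nsq -sum_mulr; apply: sum_le => c.
have -> : w c = \S_(a < m) (Bi c a * mv B w a).
  rewrite -(sum_delta_l c w).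
  under eq_bigr => b _ do rewrite -inv_entries -sum_mulr.
  rewrite exchange_big; apply: eq_bigr => a _.
  by rewrite /mv -sum_mull; apply: eq_bigr => b _; ring.
exact: cauchy_schwarz_sum.
Qed.

Lemma psd_unit_coercive B : symf B -> psdf B -> B \in unitmx ->
  exists C, 0 <= C /\ forall w, nsq w <= C * qf B w.
Proof.
move=> HS HP HU; have [T [HT HTw]] := unitmx_bounded_below HU.
have HA := sabs_ge0 B.
exists (T * sabs B); split; first exact: Rmult_le_pos.
move=> w; apply: Rle_trans (HTw w) _; rewrite Rmult_assoc.
exact: Rmult_le_compat_l (nsq_mv_le_qf w HS HP).
Qed.

End Coercivity.

(* The least eigenvalue of a real symmetric matrix: it is the Rayleigh infimum, which is
   attained because A - l I is psd and cannot be coercive, hence is singular. *)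
Section LeastEigenvalue.
Variable m : nat.
Implicit Types (A : 'I_m -> 'I_m -> R) (w : 'I_m -> R).

Lemma rayleigh_infimum A : (0 < m)%N -> exists l,
  (forall w, l * nsq w <= qf A w) /\
  (forall eps, 0 < eps -> exists w, 0 < nsq w /\ qf A w < (l + eps) * nsq w).
Proof.
move=> m_gt0.
pose E r := exists w, 0 < nsq w /\ r = - (qf A w / nsq w).
have E_bounded : bound E.
  exists (sabs A) => r [w [Hw ->]].
  have := qf_abs_le A w; have := Rle_abs (- qf A w); rewrite Rabs_Ropp => h1 h2.
  apply: (Rmult_le_reg_r (nsq w)) => //.
  have -> : - (qf A w / nsq w) * nsq w = - qf A w by field; lra.
  lra.
have E_inhabited : exists r, E r.
  pose p := Ordinal m_gt0.
  have Hp : 0 < nsq (delta p) by apply: (@nsq_pos _ _ p); rewrite /delta eqxx; lra.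
  by exists (- (qf A (delta p) / nsq (delta p))), (delta p).
have [M [M_ub M_least]] := completeness E E_bounded E_inhabited.
exists (- M); split.
  move=> w; case: (Rle_lt_or_eq_dec 0 (nsq w) (nsq_ge0 w)) => [Hw|Hw0].
    have := M_ub _ (ex_intro _ w (conj Hw erefl)).
    set q := qf A w / nsq w; have -> : qf A w = q * nsq w by rewrite /q; field; lra.
    by nra.
  have := qf_abs_le A w; have := Rle_abs (- qf A w).
  by rewrite Rabs_Ropp -Hw0 !Rmult_0_r; lra.
move=> eps eps_pos; apply: NNPP => Hno.
suff : M <= M - eps by lra.
apply: M_least => r [w [Hw ->]]; apply: Rnot_lt_le => Hlt; apply: Hno.
exists w; split => //.
set q := qf A w / nsq w; have -> : qf A w = q * nsq w by rewrite /q; field; lra.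
by rewrite -/q in Hlt; nra.
Qed.

(* A - l I, as a matrix, so that its determinant is available. *)
Definition shiftmx A l : 'M[R]_m := \matrix_(a, b) (A a b - l * delta a b).

Lemma shiftmxE A l a b : shiftmx A l a b = A a b - l * delta a b.
Proof. exact: mxE. Qed.

Lemma least_eigenpair A : (0 < m)%N -> symf A -> exists l (v : 'I_m -> R),
  (exists a, v a <> 0) /\ (forall a, mv A v a = l * v a) /\
  (forall w, l * nsq w <= qf A w).
Proof.
move=> m_gt0 HA; have [l [l_low l_inf]] := rayleigh_infimum A m_gt0.
set B := shiftmx A l.
have B_sym : symf B by move=> a b; rewrite !shiftmxE HA /delta eq_sym.
have qf_B w : qf B w = qf A w - l * nsq w by apply: qf_sub_scaled_id => a b; rewrite shiftmxE.
have B_psd : psdf B by move=> w; rewrite qf_B; have := l_low w; lra.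
have B_sing : (\det B == 0)%R.
  apply: contraT => B_unit; rewrite -GRing.unitfE -unitmxE in B_unit.
  have [C [C_ge0 C_coer]] := psd_unit_coercive B_sym B_psd B_unit.
  have e_pos : 0 < / (C + 1) by apply: Rinv_0_lt_compat; lra.
  have [w [Hw Hlt]] := l_inf _ e_pos.
  have := C_coer w; rewrite qf_B => Hc.
  have He : / (C + 1) * (C + 1) = 1 by field; lra.
  by nra.
have [v v_neq0 Hv] := det0P B_sing.
exists l, (v ord0); split; [|split] => //.
  apply: NNPP => Hall; move/negP: v_neq0; apply; apply/eqP/rowP => a.
  rewrite !mxE; apply: NNPP => Ha; apply: Hall; by exists a.
move=> a; have Hcol : \S_(b < m) (v ord0 b * B b a) = 0.
  by have := congr1 (fun u : 'rV[R]_m => u ord0 a) Hv; rewrite !mxE.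
apply: Rminus_diag_uniq; rewrite -Hcol -(sum_delta_l a (v ord0)) /mv -sum_mull -sum_sub.
by apply: eq_bigr => b _; rewrite shiftmxE HA /delta eq_sym; ring.
Qed.

End LeastEigenvalue.

(* By induction
   on the number of nonzero rows of A: if A_pp > 0 then A = S + a a^T / A_pp with a the
   p-th row and S the Schur complement, which is psd and has one more zero row; if A_pp = 0
   the whole p-th row vanishes. *)
Section Fejer.
Variable m : nat.
Implicit Types A B : 'I_m -> 'I_m -> R.

Definition frob A B := \S_(a < m) \S_(b < m) (A a b * B a b).

Definition schur A p : 'I_m -> 'I_m -> R := fun a b => A a b - A a p * A p b / A p p.

Lemma schur_sym A p : symf A -> symf (schur A p).
Proof. by move=> HS a b; rewrite /schur /Rdiv (HS a b) (HS a p) (HS p b); ring. Qed.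

Lemma schur_row A p b : 0 < A p p -> schur A p p b = 0.
Proof. by move=> Hpp; rewrite /schur; field; lra. Qed.

(* qf (schur A p) w = qf A (w - (c / A_pp) e_p) with c = (Aw)_p, which is >= 0. *)
Lemma schur_psd A p : symf A -> psdf A -> 0 < A p p -> psdf (schur A p).
Proof.
move=> HS HP Hpp w; set c := mv A w p.
have c_left : \S_(a < m) (w a * A a p) = c.
  by apply: eq_bigr => a _; rewrite HS; ring.
have -> : qf (schur A p) w = qf A w - c * c / A p p.
  rewrite /qf /bil; transitivity (\S_(a < m) \S_(b < m)
      (w a * A a b * w b + (- / A p p) * ((w a * A a p) * (A p b * w b)))).
    by apply: eq_bigr => a _; apply: eq_bigr => b _; rewrite /schur; field; lra.
  by rewrite sum2_add sum2_mull sum_prod c_left -/(mv A w p) -/c; field; lra.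
have Hline := HP (fun a => w a + (- c / A p p) * delta p a).
rewrite qf_line qf_delta bil_delta_l bil_delta_r c_left -/c in Hline.
by apply: Rle_trans Hline _; right; field; lra.
Qed.

Lemma frob_schur A B p : symf A -> 0 < A p p ->
  frob A B = frob (schur A p) B + / A p p * qf B (A p).
Proof.
move=> HS Hpp; rewrite /frob /qf /bil -sum2_mull -sum2_add.
by apply: eq_bigr => a _; apply: eq_bigr => b _; rewrite /schur (HS a p); field; lra.
Qed.

Lemma psd_zero_diag_row A p : symf A -> psdf A -> A p p = 0 -> forall b, A p b = 0.
Proof.
move=> HS HP Hpp0 b.
suff : A p b * A p b <= 0 * A b b by nra.
apply: discriminant_le => [|s]; first lra.
have := HP (fun a => delta b a + s * delta p a).
by rewrite qf_line !qf_delta !bil_delta Hpp0 (HS b p); lra.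
Qed.

Lemma fejer_rows B : psdf B -> forall d A, symf A -> psdf A ->
  (forall a b : 'I_m, (a < m - d)%N -> A a b = 0) -> 0 <= frob A B.
Proof.
move=> HB; elim=> [|d IH] A HS HP Hzero.
  rewrite /frob big1 => [|a _]; first lra.
  by rewrite big1 // => b _; rewrite Hzero ?subn0 //; ring.
case: (ltnP d m) => d_lt; last first.
  apply: IH => // a b; suff -> : (m - d = 0)%N by [].
  by apply/eqP; rewrite subn_eq0.
have p_lt : (m - d.+1 < m)%N.
  by rewrite ltn_subrL; apply/andP; split => //; apply: leq_ltn_trans d_lt.
pose p := Ordinal p_lt.
have rows_before (a : 'I_m) : (a < m - d)%N -> a = p \/ (a < m - d.+1)%N.
  rewrite -subnSK // ltnS leq_eqVlt => /orP [/eqP Ha|Ha]; last by right.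
  by left; apply: val_inj.
case: (Rle_lt_or_eq_dec 0 (A p p) (psd_diag_ge0 p HP)) => [Hpp|Hpp0].
  rewrite (frob_schur B HS Hpp).
  have : 0 <= frob (schur A p) B.
    apply: IH; [exact: schur_sym | exact: schur_psd | ].
    move=> a b /rows_before [->|Ha]; first exact: schur_row.
    by rewrite /schur (Hzero a b Ha) (Hzero a p Ha); lra.
  by have := HB (A p); have := Rinv_0_lt_compat _ Hpp; nra.
apply: IH => // a b /rows_before [->|Ha]; first exact: psd_zero_diag_row.
exact: Hzero.
Qed.

Lemma fejer A B : symf A -> psdf A -> psdf B -> 0 <= frob A B.
Proof. by move=> HS HA HB; apply: (@fejer_rows B HB m A HS HA) => a b; rewrite subnn. Qed.

End Fejer.

Lemma mkME m (f : 'I_m -> 'I_m -> R) a b : mkM f a b = f a b.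
Proof. exact: mxE. Qed.

Section ProductSpace.
Variables (k : nat) (n : 'I_k -> nat).
Implicit Types X Y Z W : Vt n.

Lemma vaddE X Y i a b : vadd X Y i a b = X i a b + Y i a b.
Proof. exact: mkME. Qed.
Lemma vsubE X Y i a b : vsub X Y i a b = X i a b - Y i a b.
Proof. exact: mkME. Qed.
Lemma vscaleE c X i a b : vscale c X i a b = c * X i a b.
Proof. exact: mkME. Qed.
Lemma vIE i a b : vI n i a b = delta b a.
Proof. exact: mkME. Qed.

Lemma psd_blocks X : psd X -> forall i, symf (X i) /\ psdf (X i).
Proof. by move=> [HXs HX] i; split => [a b | w]; [exact: HXs | exact: HX]. Qed.

Lemma inner_split X Y Z W : (forall i a b, W i a b = Y i a b + Z i a b) ->
  inner X W = inner X Y + inner X Z.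
Proof.
move=> HW; rewrite /inner -big_split; apply: eq_bigr => i _; rewrite -big_split.
apply: eq_bigr => a _; rewrite -big_split; apply: eq_bigr => b _ /=; rewrite HW; ring.
Qed.

Lemma inner_add_r X Y Z : inner X (vadd Y Z) = inner X Y + inner X Z.
Proof. by apply: inner_split => i a b; rewrite vaddE. Qed.

Lemma inner_sub_r X Y Z : inner X (vsub Y Z) = inner X Y - inner X Z.
Proof.
rewrite /inner -sum_sub; apply: eq_bigr => i _; rewrite -sum_sub; apply: eq_bigr => a _.
by rewrite -sum_sub; apply: eq_bigr => b _; rewrite vsubE; ring.
Qed.

Lemma inner_scale_r c X Y : inner X (vscale c Y) = c * inner X Y.
Proof.
rewrite /inner -sum_mull; apply: eq_bigr => i _; rewrite -sum2_mull.
by apply: eq_bigr => a _; apply: eq_bigr => b _; rewrite vscaleE; ring.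
Qed.

Lemma inner_comm X Y : inner X Y = inner Y X.
Proof. by apply: eq_bigr => i _; apply: eq_bigr => a _; apply: eq_bigr => b _; ring. Qed.

Lemma inner_ge0 X : 0 <= inner X X.
Proof. by apply: sum_ge0 => i; apply: sum_ge0 => a; apply: sum_ge0 => b; exact: Rle_0_sqr. Qed.

Lemma inner_ge_neg_norms X Y : - (vnorm X * vnorm Y) <= inner X Y.
Proof.
have CS : inner X Y * inner X Y <= inner X X * inner Y Y.
  rewrite Rmult_comm; apply: discriminant_le; first exact: inner_ge0.
  move=> s; have := inner_ge0 (vadd X (vscale s Y)).
  rewrite inner_add_r inner_scale_r (inner_comm _ X) (inner_comm _ Y).
  by rewrite !inner_add_r !inner_scale_r (inner_comm Y X); nra.
have := abs_le_sqrt_mul (inner_ge0 X) (inner_ge0 Y) CS.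
by rewrite /vnorm; have := Rle_abs (- inner X Y); rewrite Rabs_Ropp; lra.
Qed.

Lemma psd_inner_ge0 X Y : psd X -> psd Y -> 0 <= inner X Y.
Proof.
move=> HX HY; apply: sum_ge0 => i.
have [HXs HXp] := psd_blocks HX i; have [_ HYp] := psd_blocks HY i.
exact: fejer HXs HXp HYp.
Qed.

Lemma psd_add X Y : psd X -> psd Y -> psd (vadd X Y).
Proof.
move=> [HXs HX] [HYs HY]; split => [i a b | i w]; first by rewrite !vaddE HXs HYs.
have -> : \S_(a < n i) \S_(b < n i) (w a * vadd X Y i a b * w b) =
    \S_(a < n i) \S_(b < n i) (w a * X i a b * w b + w a * Y i a b * w b).
  by apply: eq_bigr => a _; apply: eq_bigr => b _; rewrite vaddE; ring.
by rewrite sum2_add; have := HX i w; have := HY i w; lra.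
Qed.

Lemma psd_scale c X : 0 <= c -> psd X -> psd (vscale c X).
Proof.
move=> Hc [HXs HX]; split => [i a b | i w]; first by rewrite !vscaleE HXs.
have -> : \S_(a < n i) \S_(b < n i) (w a * vscale c X i a b * w b) =
    \S_(a < n i) \S_(b < n i) (c * (w a * X i a b * w b)).
  by apply: eq_bigr => a _; apply: eq_bigr => b _; rewrite vscaleE; ring.
by rewrite sum2_mull; have := HX i w; nra.
Qed.

Lemma inner_nonzero_block X Y : inner X Y <> 0 -> exists i, (0 < n i)%N.
Proof.
move=> HXY; apply: NNPP => Hno; apply: HXY; apply: big1 => i _.
by apply: sum_empty; case: (posnP (n i)) => // Hi; exfalso; apply: Hno; exists i.
Qed.

Lemma eigen_qf X i (v : 'I_(n i) -> R) l :
  (forall a, mv (X i) v a = l * v a) -> qf (X i) v = l * nsq v.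
Proof. by move=> Hv; rewrite /qf bil_mv /nsq -sum_mull; apply: eq_bigr => a _; rewrite Hv; ring. Qed.

(* A symmetric element with a nonempty block has a least eigenvalue l, which bounds all
   Rayleigh quotients from below: the least of the blocks' least eigenvalues. *)
Lemma least_eigenvalue_exists X : symV X -> (exists i, (0 < n i)%N) ->
  exists l, is_eigenvalue X l /\ forall i w, l * nsq w <= qf (X i) w.
Proof.
move=> HX Hpos.
have block_eigenpair i : exists l, (0 < n i)%N -> exists v : 'I_(n i) -> R,
    (exists a, v a <> 0) /\ (forall a, mv (X i) v a = l * v a) /\
    forall w, l * nsq w <= qf (X i) w.
  case: (posnP (n i)) => [n0|npos]; first by exists 0.
  have [l [v Hv]] := least_eigenpair npos (fun a b => HX i a b).
  by exists l => _; exists v.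
have [L HL] := choice _ block_eigenpair.
have [i0 [Pi0 L_min]] := @finite_argmin _ (fun i : 'I_k => (0 < n i)%N) L Hpos.
have [v [Hv [Hev _]]] := HL i0 Pi0.
exists (L i0); split; first by exists i0, v.
move=> i w; case: (posnP (n i)) => [n0|npos].
  by rewrite /qf /bil /nsq !sum_empty //; lra.
have [_ [_ [_ Hlow]]] := HL i npos.
by have := L_min i npos; have := nsq_ge0 w; have := Hlow w; nra.
Qed.

Lemma lambda_min_eq X l : is_eigenvalue X l ->
  (forall i w, l * nsq w <= qf (X i) w) -> lambda_min X = l.
Proof.
move=> He Hb.
have Hmin : is_lambda_min X l.
  split => // l' [i [v [[a Ha] Hv]]].
  have := Hb i v; rewrite (eigen_qf Hv) => H.
  by apply: (Rmult_le_reg_r (nsq v)) => //; exact: nsq_pos Ha.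
have [He' Hb'] := epsilon_spec (inhabits 0) (is_lambda_min X) (ex_intro _ l Hmin).
by have := Hb' l He; have := proj2 Hmin _ He'; rewrite /lambda_min; lra.
Qed.

End ProductSpace.

(* The rank-one element v v^T, with v placed in block i and zero elsewhere. *)
Section RankOne.
Variables (k : nat) (n : 'I_k -> nat) (i : 'I_k) (v : 'I_(n i) -> R).

Definition embed : forall j : 'I_k, 'I_(n j) -> R :=
  @dfwith _ (fun j => 'I_(n j) -> R) (fun j _ => 0) i v.
Arguments embed : clear implicits.

Definition rank_one : Vt n := fun j => mkM (fun a b => embed j a * embed j b).

Lemma inner_rank_one (Y : Vt n) : inner rank_one Y = qf (Y i) v.
Proof.
rewrite /inner (bigD1 i) //= [X in _ + X]big1 => [|j Hj].
  rewrite Rplus_0_r; apply: eq_bigr => a _; apply: eq_bigr => b _.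
  by rewrite mkME /embed dfwith_in; ring.
apply: big1 => a _; apply: big1 => b _.
by rewrite mkME /embed dfwith_out; [ring | rewrite eq_sym].
Qed.

Lemma rank_one_psd : psd rank_one.
Proof.
split => [j a b | j w]; first by rewrite !mkME; ring.
have -> : \S_(a < n j) \S_(b < n j) (w a * rank_one j a b * w b) =
    \S_(a < n j) (w a * embed j a) * \S_(b < n j) (w b * embed j b).
  by rewrite -sum_prod; apply: eq_bigr => a _; apply: eq_bigr => b _; rewrite mkME; ring.
exact: Rle_0_sqr.
Qed.

Lemma vnorm_rank_one : vnorm rank_one = nsq v.
Proof.
rewrite /vnorm; have -> : inner rank_one rank_one = nsq v * nsq v.
  rewrite inner_rank_one /qf /bil /nsq -sum_prod.
  by apply: eq_bigr => a _; apply: eq_bigr => b _; rewrite mkME /embed dfwith_in; ring.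
by rewrite sqrt_square //; exact: nsq_ge0.
Qed.

End RankOne.

Section DualBound.
Variables (k : nat) (n : 'I_k -> nat).
Implicit Types (J : Vt n -> Prop) (X Y Z M H Q : Vt n).

(* If Y1 is in K1^* then every eigenvalue of Y1 + Z is at least -||Z||: test the
   eigenvalue equation against the rank-one element v v^T. *)
Lemma eigenvalue_lower_bound Y1 Z M l : dual (@psd k n) Y1 ->
  (forall i a b, M i a b = Y1 i a b + Z i a b) -> is_eigenvalue M l -> - vnorm Z <= l.
Proof.
move=> [_ HY1] HM [i [v [[a Ha] Hev]]].
have v_pos := nsq_pos Ha.
have Hsplit : l * nsq v = inner (rank_one v) Y1 + inner (rank_one v) Z.
  by rewrite -(eigen_qf Hev) -inner_rank_one; exact: inner_split.
have := HY1 _ (rank_one_psd v); have := inner_ge_neg_norms (rank_one v) Z.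
rewrite vnorm_rank_one => HZ HY.
apply: (Rmult_le_reg_r (nsq v)) => //; nra.
Qed.

Lemma psd_shift M t : symV M -> (forall i w, t * nsq w <= qf (M i) w) ->
  psd (vsub M (vscale t (vI n))).
Proof.
move=> HM Ht; split => [i a b | i w].
  by rewrite !vsubE !vscaleE !vIE HM /delta eq_sym.
have -> : \S_(a < n i) \S_(b < n i) (w a * vsub M (vscale t (vI n)) i a b * w b) =
    qf (M i) w - t * nsq w.
  by apply: qf_sub_scaled_id => a b; rewrite vsubE vscaleE vIE /delta eq_sym.
by have := Ht i w; lra.
Qed.

(* Condition (III) extends from the slice <H, X> = 1 to the whole cone J: by scaling
   when <X, H> > 0, and when <X, H> = 0 because X0 + s X stays in the slice for all s >= 0. *)
Lemma trace_bound_on_cone J H X0 rho :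
  (forall X Y, J X -> J Y -> J (vadd X Y)) ->
  (forall c X, 0 <= c -> J X -> J (vscale c X)) ->
  (forall X, J X -> 0 <= inner X H) -> J X0 -> inner H X0 = 1 ->
  (forall X, J X -> inner H X = 1 -> inner (vI n) X <= rho) ->
  forall X, J X -> inner (vI n) X <= rho * inner X H.
Proof.
move=> J_add J_scale HH JX0 HX0 HIII X JX.
case: (Rle_lt_or_eq_dec 0 (inner X H) (HH X JX)) => [h_pos|h0].
  have Jh : J (vscale (/ inner X H) X).
    by apply: J_scale => //; apply: Rlt_le; apply: Rinv_0_lt_compat.
  have := HIII _ Jh; rewrite !inner_scale_r (inner_comm H X) Rinv_l; last lra.
  move=> /(_ erefl) Hle.
  have -> : inner (vI n) X = inner X H * (/ inner X H * inner (vI n) X) by field; lra.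
  by rewrite Rmult_comm; apply: Rmult_le_compat_r; lra.
rewrite -h0 Rmult_0_r; apply: Rnot_lt_le => tr_pos.
pose s := (Rabs (rho - inner (vI n) X0) + 1) / inner (vI n) X.
have s_ge0 : 0 <= s.
  by apply: Rlt_le; apply: Rdiv_lt_0_compat => //; have := Rabs_pos (rho - inner (vI n) X0); lra.
have := HIII _ (J_add _ _ JX0 (J_scale _ _ s_ge0 JX)).
rewrite !inner_add_r !inner_scale_r (inner_comm H X) -h0 HX0 Rmult_0_r Rplus_0_r.
move=> /(_ erefl).
have -> : s * inner (vI n) X = Rabs (rho - inner (vI n) X0) + 1 by rewrite /s; field; lra.
by have := Rle_abs (rho - inner (vI n) X0); lra.
Qed.

Lemma weak_duality J Q H X0 y : J X0 -> inner H X0 = 1 ->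
  dual J (vsub Q (vscale y H)) -> y <= inner X0 Q.
Proof.
move=> JX0 HX0 [_ Hdual]; have := Hdual X0 JX0.
by rewrite inner_sub_r inner_scale_r (inner_comm X0 H) HX0; lra.
Qed.

Lemma cap_psd_add K2 : closed_convex_cone K2 -> forall X Y,
  cap (@psd k n) K2 X -> cap (@psd k n) K2 Y -> cap (@psd k n) K2 (vadd X Y).
Proof.
move=> [_ [_ [K2_add _]]] X Y [? ?] [? ?].
by split; [exact: psd_add | exact: K2_add].
Qed.

Lemma cap_psd_scale K2 : closed_convex_cone K2 -> forall c X,
  0 <= c -> cap (@psd k n) K2 X -> cap (@psd k n) K2 (vscale c X).
Proof.
move=> [_ [_ [_ [K2_scale _]]]] c X Hc [? ?].
by split; [exact: psd_scale | exact: K2_scale].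
Qed.

(* The key step: if M := Q - yH - Y2 satisfies M - tI psd with t <= 0, Y2 is in J^* and the
   trace bound holds on J, then Q - (y + rho t) H is in J^*, since
   <X, Q - (y + rho t) H> = <X, M - tI> + <X, Y2> + t (<X, I> - rho <X, H>). *)
Lemma shifted_dual_feasible J Q H Y2 y t rho :
  (forall X, J X -> psd X) -> (forall X, J X -> 0 <= inner X Y2) -> symV Q -> symV H ->
  (forall X, J X -> inner (vI n) X <= rho * inner X H) -> t <= 0 ->
  psd (vsub (vsub (vsub Q (vscale y H)) Y2) (vscale t (vI n))) ->
  dual J (vsub Q (vscale (y + rho * t) H)).
Proof.
move=> J_psd J_Y2 HQ HH Htr t_le0 Hshift; split.
  by move=> i a b; rewrite !vsubE !vscaleE HQ HH.
move=> X JX; have := psd_inner_ge0 (J_psd X JX) Hshift.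
have := J_Y2 X JX; have := Htr X JX.
rewrite !inner_sub_r !inner_scale_r (inner_comm X (vI n)); nra.
Qed.

End DualBound.

Theorem lemma3p3 (k : nat) (n : 'I_k -> nat)
  (K2 : Vt n -> Prop) (Q H : Vt n) (rho : R)
  (* standing setting *)
  (HQ : symV Q) (HH : symV H)
  (HK2 : closed_convex_cone K2)
  (* Condition (I) *)
  (HI_feas : exists X, cap (@psd k n) K2 X /\ inner H X = 1)
  (HI_H : msum (dual (@psd k n)) (dual K2) H)
  (* Condition (II) *)
  (HII : forall Y, dual (cap (@psd k n) K2) Y <-> msum (dual (@psd k n)) (dual K2) Y)
  (* Condition (III) *)
  (Hrho : 0 < rho)
  (HIII : forall X, cap (@psd k n) K2 X -> inner H X = 1 -> inner (vI n) X <= rho)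
  (* y with an optimal solution (Y1h, Y2h) of the problem defining g(y) *)
  (y : R) (Y1h Y2h : Vt n)
  (HY1h : dual (@psd k n) Y1h) (HY2h : dual K2 Y2h)
  (Hopt : forall Y1 Y2, dual (@psd k n) Y1 -> dual K2 Y2 ->
     vnorm (vsub (vsub Q (vscale y H)) (vadd Y1h Y2h))
       <= vnorm (vsub (vsub Q (vscale y H)) (vadd Y1 Y2)))
  (Hg : 0 < vnorm (vsub (vsub Q (vscale y H)) (vadd Y1h Y2h))) :
  let G := fun y' => vsub Q (vscale y' H) in
  let g := vnorm (vsub (G y) (vadd Y1h Y2h)) in
  let t := Rmin 0 (lambda_min (vsub (G y) Y2h)) in
  let dual_feasible := fun y' => msum (dual (@psd k n)) (dual K2) (G y') in
  y - rho * g <= y + rho * t /\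
  exists ystar, is_lub dual_feasible ystar /\ y + rho * t <= ystar.
Proof.
move=> G g t dual_feasible.
have [X0 [JX0 HX0]] := HI_feas.
set M := vsub (G y) Y2h.
have M_sym : symV M by move=> i a b; rewrite /M /G !vsubE !vscaleE HQ HH (proj1 HY2h).
have nonempty : exists i, (0 < n i)%N by apply: (@inner_nonzero_block _ _ H X0); lra.
have [l [l_eig l_low]] := least_eigenvalue_exists M_sym nonempty.
have t_eq : t = Rmin 0 l by rewrite /t -/M (lambda_min_eq l_eig l_low).
have [t_le0 t_le_l] : t <= 0 /\ t <= l by rewrite t_eq; split; [exact: Rmin_l | exact: Rmin_r].
have g_le_l : - g <= l.
  apply: (@eigenvalue_lower_bound _ _ Y1h _ M _ HY1h _ l_eig) => i a b.
  by rewrite /M !vsubE vaddE; ring.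
have g_ge0 : 0 <= g := sqrt_pos _.
have g_le_t : - g <= t by rewrite t_eq; apply: Rmin_glb; lra.
split; first by nra.
have Htr := trace_bound_on_cone (cap_psd_add HK2) (cap_psd_scale HK2)
  (proj2 ((HII H).2 HI_H)) JX0 HX0 HIII.
have Hshift : psd (vsub M (vscale t (vI n))).
  by apply: psd_shift => // i w; have := l_low i w; have := nsq_ge0 w; nra.
have feasible : dual_feasible (y + rho * t).
  apply/HII; apply: shifted_dual_feasible (fun X JX => proj1 JX) _ HQ HH Htr t_le0 Hshift.
  by move=> X [_ XK2]; exact: (proj2 HY2h).
have Hub y' : dual_feasible y' -> y' <= inner X0 Q by move=> /HII; exact: weak_duality JX0 HX0.
have [ys ys_lub] := completeness _ (ex_intro _ _ Hub) (ex_intro _ _ feasible).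
by exists ys; split; [exact: ys_lub | exact: (proj1 ys_lub)].
Qed.
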